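(* Let $\overline\eta\in(-\frac{\pi}{2},\frac{\pi}{2})^m$ and $\overline V\in\mathbb{R}^n_{>0}$ satisfy $E(\overline\eta)\overline V=\overline E_{fd}$ and \[ E(\overline\eta)-\mathrm{diag}(\overline V)^{-1}|D|\Gamma(\overline V)\mathrm{diag}(\boldsymbol{\sin}(\overline\eta))\mathrm{diag}(\boldsymbol{\cos}(\overline\eta))^{-1}\mathrm{diag}(\boldsymbol{\sin}(\overline\eta))|D|^T\mathrm{diag}(\overline V)^{-1}>0. \quad (\ast) \] Then the function \[ W_2(\eta,\overline\eta,V,\overline V)=-\mathbf{1}_m^T\Gamma(V)\boldsymbol{\cos}(\eta)+\mathbf{1}_m^T\Gamma(\overline V)\boldsymbol{\cos}(\overline\eta)-(\Gamma(\overline V)\boldsymbol{\sin}(\overline\eta))^T(\eta-\overline\eta)-\overline E_{fd}^T(V-\overline V)+\tfrac12V^TFV-\tfrac12\overline V^TF\overline V, \] where $F$ is the diagonal matrix with $F_{ii}=\frac{1-B_{ii}(X_{di}-X'_{di})}{X_{di}-X'_{di}}$, has a strict local minimum (as a function of $(\eta,V)$) at $(\overline\eta,\overline V)$.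
   Context: Standing setup (power network model). $\mathcal{G}=(\mathcal{V},\mathcal{E})$ is a connected undirected graph with node set $\{1,\dots,n\}$ and $m$ edges; each edge $k=\{i,j\}$ is given an arbitrary orientation, and $D\in\mathbb{R}^{n\times m}$ is the incidence matrix: $d_{ik}=+1$ if $i$ is the positive end of edge $k$, $-1$ if $i$ is the negative end, $0$ otherwise. $|D|$ denotes the matrix of entrywise absolute values of $D$. $\mathbf{1}_n$ is the all-ones vector. For each edge $k=\{i,j\}$ there is a susceptance $B_{ij}=B_{ji}>0$; each node has a self-susceptance $B_{ii}<0$ with $|B_{ii}|>\sum_{j\in\mathcal{N}_i}|B_{ij}|$ ($\mathcal{N}_i$ the neighbours of $i$ in $\mathcal{G}$), and reactances $X_{di}>X'_{di}>0$. For $V\in\mathbb{R}^n$, $\Gamma(V)=\mathrm{diag}(\gamma_1,\dots,\gamma_m)$ with $\gamma_k=V_iV_jB_{ij}$ for edge $k=\{i,j\}$. For $\eta\in\mathbb{R}^m$, $E(\eta)\in\mathbb{R}^{n\times n}$ is the symmetric matrix with $E_{ii}=\frac{1-B_{ii}(X_{di}-X'_{di})}{X_{di}-X'_{di}}$, $E_{ij}=-B_{ij}\cos(\eta_k)$ if $k=\{i,j\}$ is an edge, and $E_{ij}=0$ otherwise. $\boldsymbol{\sin}$, $\boldsymbol{\cos}$ act componentwise. $M,A,T$ are diagonal positive definite $n\times n$ matrices ($A=\mathrm{diag}(A_i)$), and $\overline E_{fd}\in\mathbb{R}^n$ is a constant vector. The network dynamics, with input $u\in\mathbb{R}^n$ (power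 generation) and demand $P^l$, are \[ \dot\eta=D^T\omega,\quad M\dot\omega=u-D\Gamma(V)\boldsymbol{\sin}(\eta)-A\omega-P^l,\quad T\dot V=-E(\eta)V+\overline E_{fd},\quad y=\omega, \] with state $(\eta,\omega,V)\in\mathbb{R}^m\times\mathbb{R}^n\times\mathbb{R}^n$. *)

From Stdlib Require Import Reals Lra Bool.
Open Scope R_scope.

Fixpoint sumR (n : nat) (f : nat -> R) : R :=
  match n with O => 0 | S k => sumR k f + f k end.

(* Graph: nodes 0..n-1, edges 0..m-1; edge k is oriented from tl k (positive
   end) to hd k (negative end). *)
Definition is_graph (n m : nat) (tl hd : nat -> nat) : Prop :=
  (forall k, (k < m)%nat -> (tl k < n)%nat /\ (hd k < n)%nat /\ tl k <> hd k) /\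
  (* no parallel edges: E is a set of unordered pairs *)
  (forall k k', (k < m)%nat -> (k' < m)%nat ->
     ((tl k = tl k' /\ hd k = hd k') \/ (tl k = hd k' /\ hd k = tl k')) -> k = k').

Definition joins (tl hd : nat -> nat) (k i j : nat) : Prop :=
  (tl k = i /\ hd k = j) \/ (tl k = j /\ hd k = i).

Inductive reach (m : nat) (tl hd : nat -> nat) (i : nat) : nat -> Prop :=
| reach_refl : reach m tl hd i i
| reach_step : forall j l k, reach m tl hd i j -> (k < m)%nat ->
    joins tl hd k j l -> reach m tl hd i l.

Definition connected (n m : nat) (tl hd : nat -> nat) : Prop :=
  forall i j, (i < n)%nat -> (j < n)%nat -> reach m tl hd i j.

Definition Dinc (tl hd : nat -> nat) (i k : nat) : R :=
  if Nat.eqb i (tl k) then 1 else if Nat.eqb i (hd k) then -1 else 0.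
Definition absD (tl hd : nat -> nat) (i k : nat) : R := Rabs (Dinc tl hd i k).

Definition Fdiag (B : nat -> nat -> R) (Xd Xd' : nat -> R) (i : nat) : R :=
  (1 - B i i * (Xd i - Xd' i)) / (Xd i - Xd' i).

Definition gamma (tl hd : nat -> nat) (B : nat -> nat -> R) (V : nat -> R) (k : nat) : R :=
  V (tl k) * V (hd k) * B (tl k) (hd k).

Definition Emat (m : nat) (tl hd : nat -> nat) (B : nat -> nat -> R)
    (Xd Xd' : nat -> R) (eta : nat -> R) (i j : nat) : R :=
  if Nat.eqb i j then Fdiag B Xd Xd' i
  else sumR m (fun k =>
         if orb (andb (Nat.eqb (tl k) i) (Nat.eqb (hd k) j)) (andb (Nat.eqb (tl k) j) (Nat.eqb (hd k) i))
         then - B i j * cos (eta k) else 0).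

(* entry (i,j) of
   E(eta) - diag(V)^-1 |D| Gamma(V) diag(sin eta) diag(cos eta)^-1 diag(sin eta) |D|^T diag(V)^-1 *)
Definition Pmat (m : nat) (tl hd : nat -> nat) (B : nat -> nat -> R)
    (Xd Xd' : nat -> R) (eta V : nat -> R) (i j : nat) : R :=
  Emat m tl hd B Xd Xd' eta i j
  - / V i * sumR m (fun k => absD tl hd i k * gamma tl hd B V k * sin (eta k)
                              * / cos (eta k) * sin (eta k) * absD tl hd j k) * / V j.

Definition pos_def (n : nat) (P : nat -> nat -> R) : Prop :=
  (forall i j, (i < n)%nat -> (j < n)%nat -> P i j = P j i) /\
  (forall x : nat -> R, (exists i, (i < n)%nat /\ x i <> 0) ->
     sumR n (fun i => sumR n (fun j => x i * P i j * x j)) > 0).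

Definition W2 (n m : nat) (tl hd : nat -> nat) (B : nat -> nat -> R)
    (Xd Xd' Efd : nat -> R) (eta etab V Vb : nat -> R) : R :=
  - sumR m (fun k => gamma tl hd B V k * cos (eta k))
  + sumR m (fun k => gamma tl hd B Vb k * cos (etab k))
  - sumR m (fun k => gamma tl hd B Vb k * sin (etab k) * (eta k - etab k))
  - sumR n (fun i => Efd i * (V i - Vb i))
  + / 2 * sumR n (fun i => V i * Fdiag B Xd Xd' i * V i)
  - / 2 * sumR n (fun i => Vb i * Fdiag B Xd Xd' i * Vb i).

Definition strict_local_min (n m : nat) (f : (nat -> R) -> (nat -> R) -> R)
    (etab Vb : nat -> R) : Prop :=
  exists delta, delta > 0 /\
    forall eta V : nat -> R,
      (forall k, (k < m)%nat -> Rabs (eta k - etab k) < delta) ->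
      (forall i, (i < n)%nat -> Rabs (V i - Vb i) < delta) ->
      ((exists k, (k < m)%nat /\ eta k <> etab k) \/
       (exists i, (i < n)%nat /\ V i <> Vb i)) ->
      f eta V > f etab Vb.

(* The change of variables x = V - Vb, u = x / Vb at the two ends of each edge and a = eta - etab
   splits W2 exactly into (1/2) x^T P x, with P the matrix assumed positive definite, plus one term
   per edge whose quadratic part is gamma/(2 cos etab) (cos etab * a + sin etab * (u_i + u_j))^2.
   That square is only positive semidefinite, but adding an arbitrarily small multiple eps |u|^2
   makes each edge term coercive in a near 0, with the cubic Taylor errors absorbed.  Positive
   definiteness of P gives x^T P x >= c |x|^2 (by induction on Schur complements), which pays for
   eps |x|^2.  Hence W2 >= c |x|^2 / 4 + sum_k mu_k a_k^2 near the equilibrium. *)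

From Stdlib Require Import Reals Lra Lia Psatz.
Open Scope R_scope.

Lemma sumR_ext n f g : (forall i, (i < n)%nat -> f i = g i) -> sumR n f = sumR n g.
Proof.
  induction n as [|n IH]; intros Hfg; simpl; [reflexivity|].
  rewrite IH by (intros; apply Hfg; lia). rewrite Hfg by lia. reflexivity.
Qed.

Lemma sumR_add n f g : sumR n (fun i => f i + g i) = sumR n f + sumR n g.
Proof. induction n as [|n IH]; simpl; [ring|]. rewrite IH; ring. Qed.

Lemma sumR_opp n f : sumR n (fun i => - f i) = - sumR n f.
Proof. induction n as [|n IH]; simpl; [ring|]. rewrite IH; ring. Qed.

Lemma sumR_sub n f g : sumR n (fun i => f i - g i) = sumR n f - sumR n g.
Proof. unfold Rminus. rewrite sumR_add, sumR_opp. reflexivity. Qed.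

Lemma sumR_scal n c f : sumR n (fun i => c * f i) = c * sumR n f.
Proof. induction n as [|n IH]; simpl; [ring|]. rewrite IH; ring. Qed.

Lemma sumR_const n c : sumR n (fun _ => c) = INR n * c.
Proof. induction n as [|n IH]; simpl sumR; [simpl; ring|]. rewrite IH, S_INR; ring. Qed.

Lemma sumR_swap n m f :
  sumR n (fun i => sumR m (fun k => f i k)) = sumR m (fun k => sumR n (fun i => f i k)).
Proof.
  induction n as [|n IH]; simpl.
  - rewrite sumR_const; ring.
  - rewrite IH, <- sumR_add. reflexivity.
Qed.

Lemma sumR_mul n f g :
  sumR n (fun i => sumR n (fun j => f i * g j)) = sumR n f * sumR n g.
Proof.
  rewrite Rmult_comm, <- (sumR_scal n (sumR n g) f).
  apply sumR_ext; intros i _. rewrite Rmult_comm, <- sumR_scal. apply sumR_ext; intros; ring.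
Qed.

Lemma sumR_le n f g : (forall i, (i < n)%nat -> f i <= g i) -> sumR n f <= sumR n g.
Proof.
  induction n as [|n IH]; intros Hfg; simpl; [lra|].
  apply Rplus_le_compat; [apply IH; intros; apply Hfg|apply Hfg]; lia.
Qed.

Lemma sumR_nonneg n f : (forall i, (i < n)%nat -> 0 <= f i) -> 0 <= sumR n f.
Proof.
  intros Hf. replace 0 with (sumR n (fun _ => 0)) by (rewrite sumR_const; ring).
  apply sumR_le; exact Hf.
Qed.

Lemma sumR_term_le n f j :
  (forall i, (i < n)%nat -> 0 <= f i) -> (j < n)%nat -> f j <= sumR n f.
Proof.
  induction n as [|n IH]; intros Hf Hj; simpl; [lia|].
  assert (0 <= sumR n f) by (apply sumR_nonneg; intros; apply Hf; lia).
  destruct (Nat.eq_dec j n) as [->|Hjn]; [lra|].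
  assert (f j <= sumR n f) by (apply IH; [intros; apply Hf|]; lia).
  assert (0 <= f n) by (apply Hf; lia). lra.
Qed.

Lemma sumR_pos n f j :
  (forall i, (i < n)%nat -> 0 <= f i) -> (j < n)%nat -> 0 < f j -> 0 < sumR n f.
Proof. intros Hf Hj Hfj. pose proof (sumR_term_le n f j Hf Hj). lra. Qed.

Definition delta (i j : nat) : R := if Nat.eqb i j then 1 else 0.

Lemma delta_sym i j : delta i j = delta j i.
Proof. unfold delta. rewrite Nat.eqb_sym. reflexivity. Qed.

Lemma sumR_delta n t f : (t < n)%nat -> sumR n (fun i => delta i t * f i) = f t.
Proof.
  induction n as [|n IH]; intros Ht; simpl; [lia|]. unfold delta at 2.
  destruct (Nat.eqb_spec n t) as [->|Hnt].
  - rewrite (sumR_ext t _ (fun _ => 0)), sumR_const; [ring|].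
    intros i Hi. unfold delta. destruct (Nat.eqb_spec i t); [lia|ring].
  - rewrite IH by lia. ring.
Qed.

Lemma sumR_delta_r n t x : (t < n)%nat -> sumR n (fun i => x i * delta i t) = x t.
Proof. intros Ht. rewrite <- (sumR_delta n t x Ht). apply sumR_ext; intros; ring. Qed.

Lemma sumR_sq_le n y : sumR n y * sumR n y <= INR n * sumR n (fun i => y i * y i).
Proof.
  assert (H : 0 <= sumR n (fun i => sumR n (fun j => (y i - y j) * (y i - y j))))
    by (apply sumR_nonneg; intros; apply sumR_nonneg; intros; apply Rle_0_sqr).
  rewrite (sumR_ext n _ (fun i => sumR n (fun j => y i * y i * 1) + sumR n (fun j => 1 * (y j * y j))
                                  + sumR n (fun j => -2 * y i * y j))) in H
    by (intros; rewrite <- !sumR_add; apply sumR_ext; intros; ring).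
  rewrite !sumR_add, !sumR_mul, sumR_const, (sumR_scal n (-2)) in H. lra.
Qed.

Definition bilin (n : nat) (P : nat -> nat -> R) (x y : nat -> R) : R :=
  sumR n (fun i => sumR n (fun j => x i * P i j * y j)).

Definition sqnorm (n : nat) (x : nat -> R) : R := sumR n (fun i => x i * x i).

Lemma sqnorm_nonneg n x : 0 <= sqnorm n x.
Proof. apply sumR_nonneg; intros; apply Rle_0_sqr. Qed.

Lemma bilin_ext n P Q x y : (forall i j, (i < n)%nat -> (j < n)%nat -> P i j = Q i j) ->
  bilin n P x y = bilin n Q x y.
Proof. intros HPQ. apply sumR_ext; intros i Hi. apply sumR_ext; intros j Hj. rewrite HPQ; auto. Qed.

Lemma bilin_sub n P Q x y :
  bilin n (fun i j => P i j - Q i j) x y = bilin n P x y - bilin n Q x y.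
Proof.
  unfold bilin. rewrite <- sumR_sub. apply sumR_ext; intros.
  rewrite <- sumR_sub. apply sumR_ext; intros. ring.
Qed.

Lemma bilin_sum n m P x y :
  bilin n (fun i j => sumR m (fun k => P k i j)) x y = sumR m (fun k => bilin n (P k) x y).
Proof.
  unfold bilin. rewrite <- (sumR_swap n m). apply sumR_ext; intros i _.
  rewrite <- (sumR_swap n m). apply sumR_ext; intros j _.
  rewrite <- sumR_scal, (Rmult_comm _ (y j)), <- sumR_scal. apply sumR_ext; intros; ring.
Qed.

Lemma bilin_scal n c P x y : bilin n (fun i j => c * P i j) x y = c * bilin n P x y.
Proof.
  unfold bilin. rewrite <- sumR_scal. apply sumR_ext; intros.
  rewrite <- sumR_scal. apply sumR_ext; intros. ring.
Qed.

Lemma bilin_add n P Q x y :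
  bilin n (fun i j => P i j + Q i j) x y = bilin n P x y + bilin n Q x y.
Proof.
  unfold bilin. rewrite <- sumR_add. apply sumR_ext; intros.
  rewrite <- sumR_add. apply sumR_ext; intros. ring.
Qed.

Lemma bilin_rank_one n u v x y :
  bilin n (fun i j => u i * v j) x y = sumR n (fun i => x i * u i) * sumR n (fun j => v j * y j).
Proof. unfold bilin. rewrite <- sumR_mul. apply sumR_ext; intros. apply sumR_ext; intros. ring. Qed.

Lemma bilin_diag n d x y :
  bilin n (fun i j => delta i j * d i) x y = sumR n (fun i => d i * x i * y i).
Proof.
  apply sumR_ext; intros i Hi.
  rewrite <- (sumR_delta n i (fun j => d i * x i * y j)) by assumption.
  apply sumR_ext; intros. rewrite (delta_sym i). ring.
Qed.

Lemma bilin_edge n s t x y : (s < n)%nat -> (t < n)%nat ->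
  bilin n (fun i j => delta i s * delta j t + delta i t * delta j s) x y
  = x s * y t + x t * y s.
Proof.
  intros Hs Ht. rewrite bilin_add, !bilin_rank_one, !sumR_delta_r by assumption.
  rewrite !sumR_delta by assumption. reflexivity.
Qed.

Lemma bilin_unit n P s t : (s < n)%nat -> (t < n)%nat ->
  bilin n P (fun i => delta i s) (fun j => delta j t) = P s t.
Proof.
  intros Hs Ht. unfold bilin.
  rewrite (sumR_ext n _ (fun i => delta i s * sumR n (fun j => delta j t * P i j)))
    by (intros; rewrite <- sumR_scal; apply sumR_ext; intros; ring).
  rewrite sumR_delta by assumption. apply sumR_delta, Ht.
Qed.

Definition schur (n : nat) (P : nat -> nat -> R) (i j : nat) : R :=
  P i j - P i n * P n j / P n n.

Lemma bilin_restrict n P x y :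
  (forall i, (i < n)%nat -> x i = y i) -> bilin n P x x = bilin n P y y.
Proof.
  intros Hxy. apply sumR_ext; intros i Hi. apply sumR_ext; intros j Hj.
  rewrite !Hxy by assumption. reflexivity.
Qed.

Lemma bilin_S n P x :
  bilin (S n) P x x = bilin n P x x + sumR n (fun i => x i * P i n * x n)
    + sumR n (fun j => x n * P n j * x j) + x n * P n n * x n.
Proof. unfold bilin. simpl. rewrite sumR_add. ring. Qed.

Lemma pos_def_last_pos n P : pos_def (S n) P -> 0 < P n n.
Proof.
  intros [_ Hpd].
  assert (He : exists i, (i < S n)%nat /\ (fun i => delta i n) i <> 0).
  { exists n. split; [lia|]. unfold delta. rewrite Nat.eqb_refl. apply R1_neq_R0. }
  specialize (Hpd _ He).
  change (bilin (S n) P (fun i => delta i n) (fun j => delta j n) > 0) in Hpd.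
  rewrite bilin_unit in Hpd by lia. lra.
Qed.

Lemma bilin_schur n P x :
  (forall i, (i < n)%nat -> P i n = P n i) -> P n n <> 0 ->
  bilin (S n) P x x =
    P n n * (x n + sumR n (fun j => P n j * x j) / P n n)
          * (x n + sumR n (fun j => P n j * x j) / P n n)
    + bilin n (schur n P) x x.
Proof.
  intros Hsym Hp. set (w := sumR n (fun j => P n j * x j)).
  assert (Hcol : sumR n (fun i => x i * P i n * x n) = x n * w).
  { unfold w. rewrite <- sumR_scal. apply sumR_ext; intros i Hi. rewrite Hsym by assumption. ring. }
  assert (Hrow : sumR n (fun j => x n * P n j * x j) = x n * w).
  { unfold w. rewrite <- sumR_scal. apply sumR_ext; intros. ring. }
  assert (Hschur : bilin n (schur n P) x x = bilin n P x x - w * w / P n n).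
  { unfold bilin, schur.
    rewrite (sumR_ext n _ (fun i => sumR n (fun j => x i * P i j * x j)
                - / P n n * sumR n (fun j => (P n i * x i) * (P n j * x j)))).
    - rewrite sumR_sub, sumR_scal, sumR_mul. unfold w, Rdiv. ring.
    - intros i Hi. rewrite <- sumR_scal, <- sumR_sub. apply sumR_ext; intros j Hj.
      rewrite Hsym by assumption. unfold Rdiv. ring. }
  rewrite bilin_S, Hcol, Hrow, Hschur. field. exact Hp.
Qed.

Lemma pos_def_schur n P : pos_def (S n) P -> pos_def n (schur n P).
Proof.
  intros HP. pose proof (pos_def_last_pos n P HP) as Hp. destruct HP as [Hsym Hpd].
  split.
  - intros i j Hi Hj. unfold schur.
    rewrite (Hsym i j), (Hsym i n), (Hsym n j) by lia. unfold Rdiv. ring.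
  - intros x [i0 [Hi0 Hx0]].
    (* extend x by the coordinate that kills the completed square *)
    set (y := fun i => if Nat.eqb i n then - (sumR n (fun j => P n j * x j) / P n n) else x i).
    assert (Hy : forall i, (i < n)%nat -> y i = x i).
    { intros i Hi. unfold y. destruct (Nat.eqb_spec i n); [lia | reflexivity]. }
    assert (Hyn : y n = - (sumR n (fun j => P n j * x j) / P n n))
      by (unfold y; rewrite Nat.eqb_refl; reflexivity).
    assert (Hy0 : y i0 <> 0) by (rewrite Hy; assumption).
    specialize (Hpd y (ex_intro _ i0 (conj (Nat.lt_lt_succ_r _ _ Hi0) Hy0))).
    change (bilin (S n) P y y > 0) in Hpd.
    rewrite bilin_schur in Hpd by first [intros i Hi; apply Hsym; lia | lra].
    rewrite (bilin_restrict n _ y x Hy), Hyn,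
      (sumR_ext n (fun j => P n j * y j) (fun j => P n j * x j)) in Hpd
      by (intros j Hj; rewrite Hy by exact Hj; reflexivity).
    change (bilin n (schur n P) x x > 0). lra.
Qed.

Lemma linear_form_sq_le n b x :
  sumR n (fun j => b j * x j) * sumR n (fun j => b j * x j)
  <= INR n * sumR n (fun j => b j * b j) * sqnorm n x.
Proof.
  eapply Rle_trans; [apply sumR_sq_le|].
  rewrite Rmult_assoc. apply Rmult_le_compat_l; [apply pos_INR|].
  unfold sqnorm. rewrite <- sumR_scal. apply sumR_le; intros j Hj.
  assert (b j * b j <= sumR n (fun j => b j * b j))
    by (apply (sumR_term_le n (fun j => b j * b j)); [intros; nra | assumption]).
  assert (0 <= x j * x j) by nra. nra.
Qed.

Lemma pos_def_coercive n P :
  pos_def n P -> exists c, 0 < c /\ forall x, c * sqnorm n x <= bilin n P x x.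
Proof.
  revert P. induction n as [|n IH]; intros P HP.
  { exists 1. split; [lra|]. intros x. unfold sqnorm, bilin. simpl. lra. }
  pose proof (pos_def_last_pos n P HP) as Hp.
  destruct (IH _ (pos_def_schur n P HP)) as [c' [Hc' Hcoer]].
  set (b := fun j => P n j / P n n).
  set (K := INR n * sumR n (fun j => b j * b j)).
  assert (HK : 0 <= K).
  { apply Rmult_le_pos; [apply pos_INR | apply sumR_nonneg; intros; nra]. }
  assert (Hw : forall x, (sumR n (fun j => P n j * x j) / P n n)
                         * (sumR n (fun j => P n j * x j) / P n n) <= K * sqnorm n x).
  { intros x. replace (sumR n (fun j => P n j * x j) / P n n) with (sumR n (fun j => b j * x j))
      by (unfold b, Rdiv; rewrite Rmult_comm, <- sumR_scal; apply sumR_ext; intros; ring).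
    apply linear_form_sq_le. }
  clearbody K.
  assert (Hc : exists c, 0 < c /\ 2 * c <= P n n /\ c * (1 + 2 * K) <= c').
  { exists (Rmin (P n n / 2) (c' / (1 + 2 * K))). split; [|split].
    - apply Rmin_pos; [lra | apply Rdiv_lt_0_compat; lra].
    - pose proof (Rmin_l (P n n / 2) (c' / (1 + 2 * K))). lra.
    - pose proof (Rmin_r (P n n / 2) (c' / (1 + 2 * K))) as Hr.
      apply (Rmult_le_compat_r (1 + 2 * K)) in Hr; [|lra].
      replace (c' / (1 + 2 * K) * (1 + 2 * K)) with c' in Hr by (field; lra). exact Hr. }
  destruct Hc as [c [Hc0 [Hc1 Hc2]]].
  exists c. split; [exact Hc0|]. intros x. destruct HP as [Hsym _].
  rewrite bilin_schur by first [intros i Hi; apply Hsym; lia | lra].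
  specialize (Hcoer x). specialize (Hw x).
  set (w := sumR n (fun j => P n j * x j) / P n n) in *. clearbody w.
  change (sqnorm (S n) x) with (sqnorm n x + x n * x n).
  pose proof (sqnorm_nonneg n x).
  assert (x n * x n <= 2 * ((x n + w) * (x n + w)) + 2 * (w * w)).
  { pose proof (Rle_0_sqr (x n + 2 * w)). unfold Rsqr in *. lra. }
  assert (c * (w * w) <= c * (K * sqnorm n x)) by (apply Rmult_le_compat_l; lra).
  assert (c * (1 + 2 * K) * sqnorm n x <= c' * sqnorm n x) by (apply Rmult_le_compat_r; lra).
  assert (2 * c * ((x n + w) * (x n + w)) <= P n n * ((x n + w) * (x n + w)))
    by (apply Rmult_le_compat_r; [apply Rle_0_sqr | lra]).
  nra.
Qed.

Lemma Rabs_le_between x y : Rabs x <= y -> - y <= x <= y.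
Proof. unfold Rabs. destruct Rcase_abs; lra. Qed.

Lemma one_sub_cos_bounds a :
  Rabs a <= 1 -> a * a / 2 - a * a * a * a / 24 <= 1 - cos a <= a * a / 2.
Proof.
  intros Ha. apply Rabs_le_between in Ha.
  destruct (pre_cos_bound a 0) as [Hlo Hhi]; try lra.
  unfold cos_approx, cos_term in *. simpl in *. split; lra.
Qed.

Lemma sin_sub_id_bound a : Rabs a <= 1 -> Rabs (sin a - a) <= Rabs a * (a * a) / 6.
Proof.
  (* [pre_sin_bound] only covers nonnegative arguments *)
  assert (Hpos : forall b, 0 <= b <= 1 -> b - b * b * b / 6 <= sin b <= b).
  { intros b Hb. destruct (pre_sin_bound b 0) as [Hlo Hhi]; try lra.
    unfold sin_approx, sin_term in *. simpl in *. split; [lra|].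
    assert (0 <= b * b * b) by (apply Rmult_le_pos; [apply Rmult_le_pos|]; lra).
    assert (b * b <= 20) by nra. nra. }
  intros Ha. apply Rabs_le. unfold Rabs in *. destruct (Rcase_abs a).
  - pose proof (Hpos (- a) ltac:(lra)) as Hb. rewrite sin_neg in Hb. nra.
  - pose proof (Hpos a ltac:(lra)). nra.
Qed.

Definition cos_remainder (e a : R) : R := cos e - cos (e + a) - sin e * a.

Lemma cos_remainder_approx e a :
  Rabs a <= 1 -> Rabs (cos_remainder e a - cos e * (a * a) / 2) <= Rabs a * (a * a) / 4.
Proof.
  intros Ha.
  assert (Hsplit : cos_remainder e a - cos e * (a * a) / 2
                   = cos e * ((1 - cos a) - a * a / 2) + sin e * (sin a - a))
    by (unfold cos_remainder; rewrite cos_plus; field).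
  pose proof (one_sub_cos_bounds a Ha).
  pose proof (Rabs_le_between _ _ (sin_sub_id_bound a Ha)).
  pose proof (COS_bound e). pose proof (SIN_bound e). pose proof (Rabs_pos a).
  assert (Haa : a * a = Rabs a * Rabs a) by (unfold Rabs; destruct Rcase_abs; ring).
  assert (a * a * a * a <= Rabs a * (a * a)) by (rewrite Haa; nra).
  rewrite Hsplit. apply Rabs_le. split; nra.
Qed.

Lemma sq_add_ge t x y : 0 <= t <= 1 / 2 -> t * (x * x) - 2 * t * (y * y) <= (x + y) * (x + y).
Proof.
  intros Ht.
  set (d := (x + y) * (x + y) - (t * (x * x) - 2 * t * (y * y))).
  assert (Hd : (1 - t) * d = ((1 - t) * x + y) * ((1 - t) * x + y) + t * (1 - 2 * t) * (y * y))
    by (unfold d; ring).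
  assert (0 <= t * (1 - 2 * t) * (y * y))
    by (apply Rmult_le_pos; [apply Rmult_le_pos; lra | apply Rle_0_sqr]).
  pose proof (Rle_0_sqr ((1 - t) * x + y)). unfold Rsqr in *.
  assert (0 <= d) by nra.
  unfold d in *. lra.
Qed.

(* What one edge contributes to W2 beyond its share of (1/2) x^T P x, with G = gamma_k(Vb),
   e = etab_k, a = eta_k - etab_k and ut, uh the relative voltage deviations at its ends. *)
Definition edge_excess (G e a ut uh : R) : R :=
  G * cos_remainder e a - G * (ut + uh + ut * uh) * (cos (e + a) - cos e)
  + G * (sin e * sin e) * ((ut + uh) * (ut + uh)) / (2 * cos e).

Lemma edge_excess_square G e a ut uh : cos e <> 0 ->
  edge_excess G e a ut uh =
    G * (1 + (ut + uh + ut * uh)) * cos_remainder e a - G * cos e * (a * a) / 2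
    + G * (ut * uh) * sin e * a
    + G / (2 * cos e) * ((cos e * a + sin e * (ut + uh)) * (cos e * a + sin e * (ut + uh))).
Proof.
  intros Hc. unfold edge_excess.
  replace (cos (e + a) - cos e) with (- (cos_remainder e a + sin e * a))
    by (unfold cos_remainder; ring).
  field. exact Hc.
Qed.

Lemma perturbed_remainder_lower_bound G e a w r :
  0 <= G -> Rabs a <= r -> r <= 1 -> - (3 * r) <= w <= 3 * r ->
  - (4 * G * r * (a * a)) <= G * (1 + w) * cos_remainder e a - G * cos e * (a * a) / 2.
Proof.
  intros HG Ha Hr Hw.
  pose proof (Rabs_pos a).
  pose proof (Rabs_le_between _ _ (cos_remainder_approx e a ltac:(lra))) as HR.
  assert (Haa : a * a = Rabs a * Rabs a) by (unfold Rabs; destruct Rcase_abs; ring).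
  assert (Har : Rabs a * (a * a) <= r * (a * a)) by (apply Rmult_le_compat_r; nra).
  pose proof (COS_bound e).
  assert (- (a * a) <= cos_remainder e a <= a * a) by nra.
  assert (- (3 * r * (a * a)) <= w * cos_remainder e a) by nra.
  replace (G * (1 + w) * cos_remainder e a - G * cos e * (a * a) / 2)
    with (G * (cos_remainder e a - cos e * (a * a) / 2) + G * (w * cos_remainder e a)) by field.
  assert (0 <= G * (a * a)) by (apply Rmult_le_pos; [lra | apply Rle_0_sqr]).
  nra.
Qed.

Lemma cross_term_lower_bound ut uh s a r :
  - 1 <= s <= 1 -> Rabs a < r -> - (r / 2 * (ut * ut + uh * uh)) <= ut * uh * s * a.
Proof.
  intros Hs Ha. apply Rabs_def2 in Ha.
  assert (- r <= s * a <= r) by (split; nra).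
  assert (- ((ut * ut + uh * uh) / 2) <= ut * uh <= (ut * ut + uh * uh) / 2)
    by (pose proof (Rle_0_sqr (ut - uh)); pose proof (Rle_0_sqr (ut + uh)); unfold Rsqr in *; lra).
  nra.
Qed.

Lemma completed_square_lower_bound G c s a p t :
  0 <= G -> 0 < c -> s * s <= 1 -> 0 <= t <= 1 / 2 ->
  G * t * c * (a * a) / 2 - G * t * (p * p) / c <= G / (2 * c) * ((c * a + s * p) * (c * a + s * p)).
Proof.
  intros HG Hc Hs Ht.
  pose proof (sq_add_ge t (c * a) (s * p) Ht) as Hsq.
  apply (Rmult_le_compat_l (G / (2 * c))) in Hsq; [|apply Rmult_le_pos; [lra | left; apply Rinv_0_lt_compat; lra]].
  replace (G / (2 * c) * (t * (c * a * (c * a)) - 2 * t * (s * p * (s * p))))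
    with (G * t * c * (a * a) / 2 - G * t * (s * s) * (p * p) / c) in Hsq by (field; lra).
  assert (G * t * (s * s) * (p * p) / c <= G * t * (p * p) / c).
  { unfold Rdiv. apply Rmult_le_compat_r; [left; apply Rinv_0_lt_compat; lra|].
    assert (0 <= G * t) by nra. pose proof (Rle_0_sqr p). unfold Rsqr in *.
    replace (G * t * (s * s) * (p * p)) with (G * t * (p * p) * (s * s)) by ring.
    rewrite <- (Rmult_1_r (G * t * (p * p))) at 2. apply Rmult_le_compat_l; nra. }
  lra.
Qed.

Lemma edge_excess_lower_bound_at G e eps t r a ut uh :
  0 < G -> 0 < cos e -> 0 <= t <= 1 / 2 -> 4 * G * t <= eps * cos e ->
  r <= 1 -> 16 * r <= t * cos e -> G * r <= eps ->
  Rabs a < r -> Rabs ut < r -> Rabs uh < r ->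
  G * t * cos e / 4 * (a * a) - eps * (ut * ut + uh * uh) <= edge_excess G e a ut uh.
Proof.
  intros HG Hc Ht Htc Hr1 Hrt HrG Ha Hut Huh.
  pose proof (SIN_bound e). pose proof (sin2_cos2 e). unfold Rsqr in *.
  rewrite edge_excess_square by lra.
  pose proof (Rabs_def2 _ _ Hut). pose proof (Rabs_def2 _ _ Huh).
  pose proof (perturbed_remainder_lower_bound G e a (ut + uh + ut * uh) r
                ltac:(lra) ltac:(lra) Hr1 ltac:(split; nra)).
  pose proof (cross_term_lower_bound ut uh (sin e) a r ltac:(lra) Ha).
  pose proof (completed_square_lower_bound G (cos e) (sin e) a (ut + uh) t
                ltac:(lra) Hc ltac:(nra) Ht).
  set (U := ut * ut + uh * uh) in *.
  assert (HU : 0 <= U) by (unfold U; nra).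
  assert (G * t * ((ut + uh) * (ut + uh)) / cos e <= eps / 2 * U).
  { apply (Rmult_le_reg_r (cos e)); [lra|].
    replace (G * t * ((ut + uh) * (ut + uh)) / cos e * cos e) with (G * t * ((ut + uh) * (ut + uh)))
      by (field; lra).
    assert ((ut + uh) * (ut + uh) <= 2 * U)
      by (unfold U; pose proof (Rle_0_sqr (ut - uh)); unfold Rsqr in *; lra).
    assert (G * t * ((ut + uh) * (ut + uh)) <= G * t * (2 * U)) by (apply Rmult_le_compat_l; nra).
    nra. }
  assert (G * (ut * uh) * sin e * a >= - (eps / 2 * U)).
  { replace (G * (ut * uh) * sin e * a) with (G * (ut * uh * sin e * a)) by ring.
    assert (G * (r / 2 * U) <= eps / 2 * U) by nra. nra. }
  assert (0 <= (t * cos e - 16 * r) * (G * (a * a)))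
    by (apply Rmult_le_pos; [lra | apply Rmult_le_pos; [lra | apply Rle_0_sqr]]).
  lra.
Qed.

Lemma edge_excess_lower_bound G e eps : 0 < G -> 0 < cos e -> 0 < eps ->
  exists r, 0 < r /\ exists mu, 0 < mu /\ forall a ut uh,
    Rabs a < r -> Rabs ut < r -> Rabs uh < r ->
    mu * (a * a) - eps * (ut * ut + uh * uh) <= edge_excess G e a ut uh.
Proof.
  intros HG Hc Heps.
  (* t is the share of the completed square spent on a^2; r then absorbs the cubic errors *)
  set (t := Rmin (1 / 2) (eps * cos e / (4 * G))).
  assert (Ht0 : 0 < t) by (apply Rmin_pos; [lra | apply Rdiv_lt_0_compat; nra]).
  assert (Ht1 : t <= 1 / 2) by apply Rmin_l.
  assert (Ht2 : 4 * G * t <= eps * cos e).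
  { pose proof (Rmin_r (1 / 2) (eps * cos e / (4 * G))) as Htr.
    apply (Rmult_le_compat_l (4 * G)) in Htr; [|lra].
    replace (4 * G * (eps * cos e / (4 * G))) with (eps * cos e) in Htr by (field; lra). exact Htr. }
  clearbody t.
  set (r := Rmin 1 (Rmin (t * cos e / 16) (eps / G))).
  assert (Hr0 : 0 < r) by (apply Rmin_pos; [lra | apply Rmin_pos; apply Rdiv_lt_0_compat; nra]).
  assert (Hr1 : r <= 1) by apply Rmin_l.
  assert (Hr2 : r <= t * cos e / 16) by (eapply Rle_trans; [apply Rmin_r | apply Rmin_l]).
  assert (Hr3 : G * r <= eps).
  { assert (Hrg : r <= eps / G) by (eapply Rle_trans; [apply Rmin_r | apply Rmin_r]).
    apply (Rmult_le_compat_l G) in Hrg; [|lra].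
    replace (G * (eps / G)) with eps in Hrg by (field; lra). exact Hrg. }
  clearbody r.
  exists r. split; [exact Hr0|]. exists (G * t * cos e / 4). split; [nra|].
  intros a ut uh. apply edge_excess_lower_bound_at; lra.
Qed.

Lemma scaled_deviation_bounds V v w r : 0 < v -> v <= V -> Rabs w < r * v ->
  Rabs (w / V) < r /\ v * v * (w / V * (w / V)) <= w * w.
Proof.
  intros Hv HvV Hw. split.
  - unfold Rdiv. rewrite Rabs_mult, Rabs_inv, (Rabs_pos_eq V) by lra.
    apply (Rmult_lt_reg_r V); [lra|]. rewrite Rmult_assoc, Rinv_l, Rmult_1_r by lra.
    pose proof (Rabs_pos w). nra.
  - replace (v * v * (w / V * (w / V))) with (w * w * ((v / V) * (v / V))) by (field; lra).
    assert (0 <= v / V <= 1).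
    { split; [apply Rlt_le, Rdiv_lt_0_compat; lra|].
      apply (Rmult_le_reg_r V); [lra|]. unfold Rdiv. rewrite Rmult_assoc, Rinv_l; lra. }
    pose proof (Rle_0_sqr w). unfold Rsqr in *.
    rewrite <- (Rmult_1_r (w * w)) at 2. apply Rmult_le_compat_l; nra.
Qed.

Lemma edge_excess_scaled_bound G e Vt Vh eps :
  0 < G -> 0 < cos e -> 0 < Vt -> 0 < Vh -> 0 < eps ->
  exists r, 0 < r /\ forall a vt vh, Rabs a < r -> Rabs vt < r -> Rabs vh < r ->
    - (eps * (vt * vt + vh * vh)) <= edge_excess G e a (vt / Vt) (vh / Vh) /\
    (a <> 0 -> - (eps * (vt * vt + vh * vh)) < edge_excess G e a (vt / Vt) (vh / Vh)).
Proof.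
  intros HG Hc HVt HVh Heps.
  set (v := Rmin Vt Vh).
  assert (Hv : 0 < v) by (apply Rmin_pos; assumption).
  assert (HvVt : v <= Vt) by apply Rmin_l. assert (HvVh : v <= Vh) by apply Rmin_r.
  clearbody v.
  assert (Hepsv : 0 < eps * (v * v)) by (apply Rmult_lt_0_compat; nra).
  destruct (edge_excess_lower_bound G e (eps * (v * v)) HG Hc Hepsv) as [r [Hr [mu [Hmu Hbound]]]].
  exists (Rmin r (r * v)). split; [apply Rmin_pos; nra|].
  intros a vt vh Ha Hvt Hvh.
  pose proof (Rmin_l r (r * v)). pose proof (Rmin_r r (r * v)).
  destruct (scaled_deviation_bounds Vt v vt r Hv HvVt ltac:(lra)) as [Hut Hut2].
  destruct (scaled_deviation_bounds Vh v vh r Hv HvVh ltac:(lra)) as [Huh Huh2].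
  assert (Har : Rabs a < r) by lra.
  specialize (Hbound a _ _ Har Hut Huh).
  assert (eps * (v * v) * (vt / Vt * (vt / Vt) + vh / Vh * (vh / Vh))
          <= eps * (vt * vt + vh * vh)) by nra.
  pose proof (Rle_0_sqr a). unfold Rsqr in *.
  split; [|intros Ha0]; [nra|].
  assert (0 < mu * (a * a)) by (apply Rmult_lt_0_compat; [lra | apply Rsqr_pos_lt; exact Ha0]).
  lra.
Qed.

Lemma Emat_expand m tl hd B Xd Xd' eta i j :
  (forall k, (k < m)%nat -> tl k <> hd k) ->
  (forall k, (k < m)%nat -> B (tl k) (hd k) = B (hd k) (tl k)) ->
  Emat m tl hd B Xd Xd' eta i j =
    delta i j * Fdiag B Xd Xd' i
    - sumR m (fun k => B (tl k) (hd k) * cos (eta k)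
                       * (delta i (tl k) * delta j (hd k) + delta i (hd k) * delta j (tl k))).
Proof.
  intros Hloop Hsym. unfold Emat, Rminus. rewrite <- sumR_opp.
  destruct (Nat.eqb_spec i j) as [<-|Hij].
  - unfold delta at 1. rewrite Nat.eqb_refl, (sumR_ext m _ (fun _ => 0)), sumR_const; [ring|].
    intros k Hk. specialize (Hloop k Hk). unfold delta.
    destruct (Nat.eqb_spec i (tl k)), (Nat.eqb_spec i (hd k)); try lia; ring.
  - unfold delta at 1. destruct (Nat.eqb_spec i j); [contradiction|]. rewrite Rmult_0_l, Rplus_0_l.
    apply sumR_ext; intros k Hk. specialize (Hsym k Hk). unfold delta.
    destruct (Nat.eqb_spec (tl k) i), (Nat.eqb_spec (hd k) j), (Nat.eqb_spec (tl k) j),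
      (Nat.eqb_spec (hd k) i), (Nat.eqb_spec i (tl k)), (Nat.eqb_spec j (hd k)),
      (Nat.eqb_spec i (hd k)), (Nat.eqb_spec j (tl k));
      simpl; subst; try lia; try rewrite Hsym; ring.
Qed.

Lemma Emat_bilin n m tl hd B Xd Xd' eta x y :
  (forall k, (k < m)%nat -> (tl k < n)%nat /\ (hd k < n)%nat /\ tl k <> hd k) ->
  (forall k, (k < m)%nat -> B (tl k) (hd k) = B (hd k) (tl k)) ->
  bilin n (Emat m tl hd B Xd Xd' eta) x y =
    sumR n (fun i => Fdiag B Xd Xd' i * x i * y i)
    - sumR m (fun k => B (tl k) (hd k) * cos (eta k) * (x (tl k) * y (hd k) + x (hd k) * y (tl k))).
Proof.
  intros Hg Hsym.
  rewrite (bilin_ext _ _ _ _ _ (fun i j _ _ => Emat_expand m tl hd B Xd Xd' eta i j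
             (fun k Hk => proj2 (proj2 (Hg k Hk))) Hsym)).
  rewrite bilin_sub, bilin_diag, bilin_sum. f_equal.
  apply sumR_ext; intros k Hk. destruct (Hg k Hk) as [Ht [Hh _]].
  rewrite bilin_scal, bilin_edge by assumption. reflexivity.
Qed.

Lemma absD_expand tl hd i k : tl k <> hd k -> absD tl hd i k = delta i (tl k) + delta i (hd k).
Proof.
  intros Hloop. unfold absD, Dinc, delta.
  destruct (Nat.eqb_spec i (tl k)), (Nat.eqb_spec i (hd k)); try lia;
    unfold Rabs; destruct Rcase_abs; lra.
Qed.

Lemma Pmat_bilin n m tl hd B Xd Xd' eta V x :
  (forall k, (k < m)%nat -> (tl k < n)%nat /\ (hd k < n)%nat /\ tl k <> hd k) ->
  bilin n (Pmat m tl hd B Xd Xd' eta V) x x =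
    bilin n (Emat m tl hd B Xd Xd' eta) x x
    - sumR m (fun k => gamma tl hd B V k * sin (eta k) * / cos (eta k) * sin (eta k)
        * ((x (tl k) / V (tl k) + x (hd k) / V (hd k)) * (x (tl k) / V (tl k) + x (hd k) / V (hd k)))).
Proof.
  intros Hg. unfold Pmat. rewrite bilin_sub. f_equal.
  rewrite (bilin_ext _ _ (fun i j => sumR m (fun k =>
     gamma tl hd B V k * sin (eta k) * / cos (eta k) * sin (eta k)
     * ((absD tl hd i k / V i) * (absD tl hd j k / V j))))).
  2:{ intros i j _ _. rewrite <- (sumR_scal m (/ V i)), Rmult_comm, <- sumR_scal.
      apply sumR_ext; intros. unfold Rdiv. ring. }
  rewrite bilin_sum. apply sumR_ext; intros k Hk. destruct (Hg k Hk) as [Ht [Hh Hloop]].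
  rewrite bilin_scal, bilin_rank_one.
  assert (Hlin : forall z, sumR n (fun i => z i * (absD tl hd i k / V i))
                           = z (tl k) / V (tl k) + z (hd k) / V (hd k)).
  { intros z. rewrite (sumR_ext n _ (fun i => delta i (tl k) * (z i / V i) + delta i (hd k) * (z i / V i)))
      by (intros; rewrite absD_expand by assumption; unfold Rdiv; ring).
    rewrite sumR_add, !sumR_delta by assumption. reflexivity. }
  rewrite Hlin, (sumR_ext n _ (fun j => x j * (absD tl hd j k / V j))), Hlin by (intros; ring).
  reflexivity.
Qed.

Lemma W2_decomposition n m tl hd B Xd Xd' Efd etab Vb eta V :
  (forall k, (k < m)%nat -> (tl k < n)%nat /\ (hd k < n)%nat /\ tl k <> hd k) ->
  (forall k, (k < m)%nat -> B (tl k) (hd k) = B (hd k) (tl k)) ->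
  (forall k, (k < m)%nat -> cos (etab k) <> 0) ->
  (forall i, (i < n)%nat -> Vb i <> 0) ->
  (forall i, (i < n)%nat -> sumR n (fun j => Emat m tl hd B Xd Xd' etab i j * Vb j) = Efd i) ->
  let x := fun i => V i - Vb i in
  W2 n m tl hd B Xd Xd' Efd eta etab V Vb =
    / 2 * bilin n (Pmat m tl hd B Xd Xd' etab Vb) x x
    + sumR m (fun k => edge_excess (gamma tl hd B Vb k) (etab k) (eta k - etab k)
                         (x (tl k) / Vb (tl k)) (x (hd k) / Vb (hd k))).
Proof.
  intros Hg Hsym Hc HVb Heq x.
  assert (Hload : sumR n (fun i => Efd i * (V i - Vb i)) = bilin n (Emat m tl hd B Xd Xd' etab) x Vb).
  { apply sumR_ext; intros i Hi. rewrite <- (Heq i Hi), Rmult_comm, <- sumR_scal.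
    apply sumR_ext; intros. unfold x. ring. }
  assert (Hnode : / 2 * sumR n (fun i => V i * Fdiag B Xd Xd' i * V i)
                  - / 2 * sumR n (fun i => Vb i * Fdiag B Xd Xd' i * Vb i)
                  = sumR n (fun i => Fdiag B Xd Xd' i * x i * Vb i)
                    + / 2 * sumR n (fun i => Fdiag B Xd Xd' i * x i * x i)).
  { rewrite <- !sumR_scal, <- sumR_sub, <- sumR_add. apply sumR_ext; intros. unfold x. field. }
  assert (Hedge : sumR m (fun k => gamma tl hd B V k * cos (eta k)) =
      sumR m (fun k => gamma tl hd B Vb k * cos (etab k))
      - sumR m (fun k => gamma tl hd B Vb k * sin (etab k) * (eta k - etab k))
      + sumR m (fun k => B (tl k) (hd k) * cos (etab k) * (x (tl k) * Vb (hd k) + x (hd k) * Vb (tl k)))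
      + / 2 * sumR m (fun k => B (tl k) (hd k) * cos (etab k) * (x (tl k) * x (hd k) + x (hd k) * x (tl k)))
      + / 2 * sumR m (fun k => gamma tl hd B Vb k * sin (etab k) * / cos (etab k) * sin (etab k)
          * ((x (tl k) / Vb (tl k) + x (hd k) / Vb (hd k)) * (x (tl k) / Vb (tl k) + x (hd k) / Vb (hd k))))
      - sumR m (fun k => edge_excess (gamma tl hd B Vb k) (etab k) (eta k - etab k)
                           (x (tl k) / Vb (tl k)) (x (hd k) / Vb (hd k)))).
  { rewrite <- !sumR_scal. repeat (rewrite <- sumR_sub || rewrite <- sumR_add).
    apply sumR_ext; intros k Hk. destruct (Hg k Hk) as [Ht [Hh _]].
    pose proof (HVb _ Ht). pose proof (HVb _ Hh). pose proof (Hc k Hk).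
    unfold edge_excess, cos_remainder, gamma, x.
    replace (etab k + (eta k - etab k)) with (eta k) by ring.
    field. repeat split; assumption. }
  unfold W2. rewrite Hload, Hedge, Pmat_bilin, !Emat_bilin by assumption.
  lra.
Qed.

Lemma W2_at_equilibrium n m tl hd B Xd Xd' Efd etab Vb :
  W2 n m tl hd B Xd Xd' Efd etab etab Vb Vb = 0.
Proof.
  unfold W2.
  rewrite (sumR_ext m (fun k => gamma tl hd B Vb k * sin (etab k) * (etab k - etab k)) (fun _ => 0)),
    (sumR_ext n (fun i => Efd i * (Vb i - Vb i)) (fun _ => 0)), !sumR_const by (intros; ring).
  ring.
Qed.

Lemma exists_common_radius m (Q : nat -> R -> Prop) :
  (forall k r r', Q k r -> 0 < r' -> r' <= r -> Q k r') ->
  (forall k, (k < m)%nat -> exists r, 0 < r /\ Q k r) ->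
  exists r, 0 < r /\ forall k, (k < m)%nat -> Q k r.
Proof.
  intros Hmono Hex. induction m as [|m IH].
  { exists 1. split; [lra | intros; lia]. }
  destruct IH as [r1 [Hr1 H1]]; [intros k Hk; apply Hex; lia|].
  destruct (Hex m (Nat.lt_succ_diag_r m)) as [r2 [Hr2 H2]].
  exists (Rmin r1 r2). split; [apply Rmin_pos; assumption|].
  intros k Hk. destruct (Nat.eq_dec k m) as [->|Hkm].
  - apply (Hmono m r2); [assumption | apply Rmin_pos; assumption | apply Rmin_r].
  - apply (Hmono k r1); [apply H1; lia | apply Rmin_pos; assumption | apply Rmin_l].
Qed.

Lemma sumR_edge_sq_le n m tl hd x :
  (forall k, (k < m)%nat -> (tl k < n)%nat /\ (hd k < n)%nat) ->
  sumR m (fun k => x (tl k) * x (tl k) + x (hd k) * x (hd k)) <= INR m * (2 * sqnorm n x).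
Proof.
  intros Hg. rewrite <- sumR_const. apply sumR_le; intros k Hk. destruct (Hg k Hk) as [Ht Hh].
  pose proof (sumR_term_le n (fun i => x i * x i) _ (fun i _ => Rle_0_sqr (x i)) Ht).
  pose proof (sumR_term_le n (fun i => x i * x i) _ (fun i _ => Rle_0_sqr (x i)) Hh).
  unfold sqnorm. lra.
Qed.

Lemma edge_sum_lower_bound n m tl hd G e U eps :
  (forall k, (k < m)%nat -> (tl k < n)%nat /\ (hd k < n)%nat) ->
  (forall k, (k < m)%nat -> 0 < G k) -> (forall k, (k < m)%nat -> 0 < cos (e k)) ->
  (forall i, (i < n)%nat -> 0 < U i) -> 0 < eps ->
  exists r, 0 < r /\ forall a x,
    (forall k, (k < m)%nat -> Rabs (a k) < r) -> (forall i, (i < n)%nat -> Rabs (x i) < r) ->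
    let S := sumR m (fun k => edge_excess (G k) (e k) (a k) (x (tl k) / U (tl k)) (x (hd k) / U (hd k))) in
    - (eps * sqnorm n x) <= S /\ ((exists k, (k < m)%nat /\ a k <> 0) -> - (eps * sqnorm n x) < S).
Proof.
  intros Hg HG Hc HU Heps.
  pose proof (pos_INR m) as Hm0.
  set (eps_e := eps / (2 * (INR m + 1))).
  assert (Heps_e : 0 < eps_e) by (apply Rdiv_lt_0_compat; lra).
  assert (Hm : eps_e * (2 * INR m) <= eps).
  { unfold eps_e. apply (Rmult_le_reg_r (2 * (INR m + 1))); [lra|].
    replace (eps / (2 * (INR m + 1)) * (2 * INR m) * (2 * (INR m + 1))) with (eps * (2 * INR m))
      by (field; lra).
    nra. }
  clearbody eps_e.
  destruct (exists_common_radius m (fun k r => forall a vt vh,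
      Rabs a < r -> Rabs vt < r -> Rabs vh < r ->
      let h := edge_excess (G k) (e k) a (vt / U (tl k)) (vh / U (hd k)) in
      - (eps_e * (vt * vt + vh * vh)) <= h /\ (a <> 0 -> - (eps_e * (vt * vt + vh * vh)) < h)))
    as [r [Hr Hedge]].
  { intros k r r' Hk _ Hr' a vt vh Ha Hvt Hvh. apply Hk; lra. }
  { intros k Hk. destruct (Hg k Hk) as [Ht Hh]. apply edge_excess_scaled_bound; auto. }
  exists r. split; [exact Hr|]. intros a x Ha Hx S.
  pose (d k := x (tl k) * x (tl k) + x (hd k) * x (hd k)).
  pose (f k := edge_excess (G k) (e k) (a k) (x (tl k) / U (tl k)) (x (hd k) / U (hd k))
               + eps_e * d k).
  assert (Hsplit : S = sumR m f - eps_e * sumR m d).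
  { unfold S, f. rewrite <- sumR_scal, <- sumR_sub. apply sumR_ext; intros. ring. }
  assert (Hf : forall k, (k < m)%nat -> 0 <= f k /\ (a k <> 0 -> 0 < f k)).
  { intros k Hk. destruct (Hg k Hk) as [Ht Hh].
    destruct (Hedge k Hk (a k) (x (tl k)) (x (hd k)) (Ha k Hk) (Hx _ Ht) (Hx _ Hh)) as [Hle Hlt].
    unfold f, d. split; [|intros Hak; specialize (Hlt Hak)]; lra. }
  assert (Hd : eps_e * sumR m d <= eps * sqnorm n x).
  { pose proof (sumR_edge_sq_le n m tl hd x Hg) as Hsum. change (sumR m d <= INR m * (2 * sqnorm n x)) in Hsum.
    pose proof (sqnorm_nonneg n x). nra. }
  rewrite Hsplit. split.
  - assert (0 <= sumR m f) by (apply sumR_nonneg; intros k Hk; apply Hf, Hk). lra.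
  - intros [k [Hk Hak]].
    assert (0 < sumR m f) by (apply (sumR_pos m _ k); [intros j Hj; apply Hf, Hj | exact Hk | apply Hf; assumption]).
    lra.
Qed.

Theorem lemma2 (n m : nat) (tl hd : nat -> nat) (B : nat -> nat -> R)
    (Xd Xd' Efd : nat -> R) (etab Vb : nat -> R)
    (Hgraph : is_graph n m tl hd)
    (Hconn : connected n m tl hd)
    (HBsym : forall k, (k < m)%nat -> B (tl k) (hd k) = B (hd k) (tl k))
    (HBpos : forall k, (k < m)%nat -> B (tl k) (hd k) > 0)
    (HBself : forall i, (i < n)%nat -> B i i < 0 /\
       Rabs (B i i) > sumR m (fun k =>
         if Nat.eqb (tl k) i then Rabs (B i (hd k))
         else if Nat.eqb (hd k) i then Rabs (B i (tl k)) else 0))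
    (HX : forall i, (i < n)%nat -> Xd i > Xd' i /\ Xd' i > 0)
    (Hetab : forall k, (k < m)%nat -> - (PI / 2) < etab k < PI / 2)
    (HVb : forall i, (i < n)%nat -> Vb i > 0)
    (Heq : forall i, (i < n)%nat ->
       sumR n (fun j => Emat m tl hd B Xd Xd' etab i j * Vb j) = Efd i)
    (Hpd : pos_def n (Pmat m tl hd B Xd Xd' etab Vb)) :
  strict_local_min n m
    (fun eta V => W2 n m tl hd B Xd Xd' Efd eta etab V Vb) etab Vb.
Proof.
  destruct Hgraph as [Hg _].
  assert (Hends : forall k, (k < m)%nat -> (tl k < n)%nat /\ (hd k < n)%nat)
    by (intros k Hk; split; apply Hg, Hk).
  assert (Hc : forall k, (k < m)%nat -> 0 < cos (etab k))
    by (intros; apply cos_gt_0; apply Hetab; assumption).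
  assert (Hgam : forall k, (k < m)%nat -> 0 < gamma tl hd B Vb k).
  { intros k Hk. destruct (Hends k Hk) as [Ht Hh]. unfold gamma.
    pose proof (HVb _ Ht). pose proof (HVb _ Hh). pose proof (HBpos k Hk).
    apply Rmult_lt_0_compat; [apply Rmult_lt_0_compat|]; lra. }
  destruct (pos_def_coercive n _ Hpd) as [c [Hc0 Hcoer]].
  destruct (edge_sum_lower_bound n m tl hd (gamma tl hd B Vb) etab Vb (c / 4)
              Hends Hgam Hc HVb ltac:(lra)) as [r [Hr Hedges]].
  exists r. split; [exact Hr|]. intros eta V Heta HV Hne. cbv beta.
  rewrite W2_at_equilibrium, W2_decomposition
    by (intros; first [apply Hg | apply HBsym | apply Heq | apply Rgt_not_eq, HVb
                      | apply Rgt_not_eq, Hc]; assumption).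
  destruct (Hedges (fun k => eta k - etab k) (fun i => V i - Vb i) Heta HV) as [Hle Hlt].
  cbv beta in Hle, Hlt.
  specialize (Hcoer (fun i => V i - Vb i)).
  pose proof (sqnorm_nonneg n (fun i => V i - Vb i)).
  destruct Hne as [[k [Hk Hk0]] | [i [Hi Hi0]]].
  - assert (Hak : eta k - etab k <> 0) by lra.
    specialize (Hlt (ex_intro _ k (conj Hk Hak))). nra.
  - assert (0 < sqnorm n (fun i => V i - Vb i)).
    { apply (sumR_pos n _ i); [intros; apply Rle_0_sqr | exact Hi |].
      apply Rsqr_pos_lt. lra. }
    nra.
Qed.
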